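(* For all integers $n,k,d\ge1$ such that $k^{1/d}$ is an integer, the function $\textsc{Word}_{S_n,k}$ is computed by an $S_n^{k-1}$-invariant $\Sigma_{d+1}$ formula and by an $S_n^{k-1}$-invariant $\Pi_{d+1}$ formula, each of size $k\,n^{d(k^{1/d}-1)}$.
   Context: $\overline{S_n}$ is the set of $n\times n$ permutation matrices. $\textsc{Word}_{S_n,k}:\overline{S_n}^k\subseteq\{0,1\}^{kn^2}\to\{0,1\}$ maps $(M_1,\dots,M_k)$ to the $(1,1)$-entry of $M_1\cdots M_k$; the variables are $M_{i,a,b}$. $S_n^{k-1}$ acts on variables by $(g_1,\dots,g_{k-1})\cdot M_{i,a,b}=M_{i,g_{i-1}(a),g_i(b)}$ with $g_0=g_k=1$. An $\mathsf{AC}$ formula is a rooted tree with unordered children. Leaves are labeled $0,1,x_i,\neg x_i$, and gates are unbounded fan-in $\textsc{and}$/$\textsc{or}$. A $\Sigma_{d+1}$ (resp. $\Pi_{d+1}$) formula is an $\mathsf{AC}$ formula of depth at most $d+1$ whose output gate is $\textsc{or}$ (resp. $\textsc{and}$). Size is the number of literal leaves. A formula is $P$-invariant if relabeling literals by any $\pi\in P$ yields an isomorphic labeled tree. ''Computes'' means agreeing with the function on $\overline{S_n}^k$. *)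

From HB Require Import structures.
From mathcomp Require Import all_boot all_order all_algebra all_fingroup.
From Stdlib Require Import List Permutation.
Set Implicit Arguments. Unset Strict Implicit. Unset Printing Implicit Defensive.
Import GRing.Theory.
Local Open Scope ring_scope.

(* Variables M_{i,a,b}: index i : 'I_k stands for the paper's i+1 (0-based). *)
Definition var (k n : nat) := ('I_k * 'I_n * 'I_n)%type.

(* Children are stored in a list, but all notions below (size, depth, value)
   ignore the order, and isomorphism ([fiso]) is up to reordering children. *)
Inductive formula (V : Type) : Type :=
| FConst of bool
| FLit of V & bool
| FAnd of list (formula V)
| FOr of list (formula V).
Arguments FConst {V}.

Fixpoint feval (V : Type) (x : V -> bool) (f : formula V) : bool :=
  match f with
  | FConst b => b
  | FLit v p => if p then x v else ~~ x v
  | FAnd l => seq.all (fun g => feval x g) l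
  | FOr l => seq.has (fun g => feval x g) l
  end.

Fixpoint fsize (V : Type) (f : formula V) : nat :=
  match f with
  | FConst _ => 0
  | FLit _ _ => 1
  | FAnd l | FOr l => sumn (seq.map (fun g => fsize g) l)
  end.

Fixpoint fdepth (V : Type) (f : formula V) : nat :=
  match f with
  | FConst _ | FLit _ _ => 0
  | FAnd l | FOr l => (foldr maxn 0 (seq.map (fun g => fdepth g) l)).+1
  end.

Definition is_or (V : Type) (f : formula V) :=
  match f with FOr _ => true | _ => false end.
Definition is_and (V : Type) (f : formula V) :=
  match f with FAnd _ => true | _ => false end.

Definition Sigma_formula (V : Type) (d : nat) (f : formula V) :=
  (fdepth f <= d.+1)%N /\ is_or f.
Definition Pi_formula (V : Type) (d : nat) (f : formula V) :=
  (fdepth f <= d.+1)%N /\ is_and f.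

Fixpoint frelabel (V : Type) (s : V -> V) (f : formula V) : formula V :=
  match f with
  | FConst b => FConst b
  | FLit v p => FLit (s v) p
  | FAnd l => FAnd (List.map (fun g => frelabel s g) l)
  | FOr l => FOr (List.map (fun g => frelabel s g) l)
  end.

Inductive fiso (V : Type) : formula V -> formula V -> Prop :=
| fiso_const b : fiso (FConst b) (FConst b)
| fiso_lit v p : fiso (FLit v p) (FLit v p)
| fiso_and l1 l2 l2' : Permutation l2 l2' -> Forall2 (@fiso V) l1 l2' ->
    fiso (FAnd l1) (FAnd l2)
| fiso_or l1 l2 l2' : Permutation l2 l2' -> Forall2 (@fiso V) l1 l2' ->
    fiso (FOr l1) (FOr l2).

(* The action of (g_1, ..., g_{k-1}) in S_n^{k-1} on variables:
   M_{i,a,b} |-> M_{i, g_{i-1}(a), g_i(b)} with g_0 = g_k = 1.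
   Here g : 'I_k.-1 -> {perm 'I_n}, and g j is the paper's g_{j+1}. *)
Definition gext (k n : nat) (g : {ffun 'I_k.-1 -> {perm 'I_n}}) (j : nat)
  : {perm 'I_n} :=
  match insub j.-1 with
  | Some j' => if (0 < j)%N then g j' else 1%g
  | None => 1%g
  end.

Definition act_var (k n : nat) (g : {ffun 'I_k.-1 -> {perm 'I_n}})
  (v : var k n) : var k n :=
  let: (i, a, b) := v in (i, gext g i a, gext g i.+1 b).

Definition Pinvariant (k n : nat) (f : formula (var k n)) :=
  forall g : {ffun 'I_k.-1 -> {perm 'I_n}}, fiso (frelabel (act_var g) f) f.

Definition Mof (k n : nat) (x : var k n -> bool) (i : 'I_k) : 'M[int]_n :=
  \matrix_(a, b) ((x (i, a, b) : nat)%:R).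

Definition in_domain (k n : nat) (x : var k n -> bool) :=
  forall i : 'I_k, is_perm_mx (Mof x i).

Definition Word (k n : nat) (hn : (0 < n)%N) (x : var k n -> bool) : bool :=
  (\big[mulmx/1%:M]_(i < k) Mof x i) (Ordinal hn) (Ordinal hn) == 1.

Definition computes (k n : nat) (hn : (0 < n)%N) (f : formula (var k n)) :=
  forall x : var k n -> bool, in_domain x -> feval x f = Word hn x.

From Stdlib Require Import List Permutation.
From mathcomp Require Import all_boot all_order all_algebra all_fingroup zify.
Set Implicit Arguments. Unset Strict Implicit. Unset Printing Implicit Defensive.

(* Read the permutation matrices M_1, ..., M_k as permutations pi_0, ..., pi_(k-1)
   of 'I_n: Word asks whether the walk of length k = m^d that starts at 0 and
   applies pi_0, ..., pi_(k-1) in turn comes back to 0.  A walk of length m * L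
   from a to b is decided by guessing the m - 1 points it visits at the multiples
   of L: either an OR over all guesses of "every sub-walk of length L follows the
   guess and the last one ends at b", or an AND over all guesses of "some sub-walk
   deviates from the guess or the last one ends at b".  Alternating the two forms
   from one level to the next lets the m sub-formulas of a guess share a single
   gate, so each of the d levels adds one to the depth and multiplies the size by
   m * n^(m-1).  The action of S_n^(k-1) relabels the point visited at each time,
   which only permutes the guesses below every gate, so the formula is invariant. *)

Lemma List_mapE (A B : Type) (f : A -> B) (s : seq A) : List.map f s = map f s.
Proof. by elim: s => //= x s ->. Qed.

Lemma perm_eq_Permutation (T : eqType) (s1 s2 : seq T) :
  perm_eq s1 s2 -> Permutation s1 s2.
Proof.
elim: s1 s2 => [|x s1 IH] s2 eq12.
  by move: eq12; rewrite perm_sym => /perm_nilP ->.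
have x_s2 : x \in s2 by rewrite -(perm_mem eq12) mem_head.
case/splitPr: x_s2 eq12 => s2a s2b eq12.
apply: Permutation_cons_app; apply: IH.
by rewrite -(perm_cons x) (perm_trans eq12) // -cat1s perm_catCA.
Qed.

Lemma perm_enum_inj (T : finType) (f : T -> T) :
  injective f -> perm_eq (enum T) (map f (enum T)).
Proof.
move=> f_inj; have [g _ gK] := injF_bij f_inj.
apply: uniq_perm => [|| y]; first exact: enum_uniq.
  by rewrite map_inj_uniq // enum_uniq.
by rewrite mem_enum -[y]gK map_f ?mem_enum.
Qed.

Lemma all_flatten (T : Type) (P : pred T) (ss : seq (seq T)) :
  all P (flatten ss) = all (all P) ss.
Proof. by elim: ss => //= s ss <-; rewrite all_cat. Qed.

Lemma has_flatten (T : Type) (P : pred T) (ss : seq (seq T)) :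
  has P (flatten ss) = has (has P) ss.
Proof. by elim: ss => //= s ss <-; rewrite has_cat. Qed.

Lemma sumn_map_const (T : Type) (f : T -> nat) (c : nat) (s : seq T) :
  (forall x, f x = c) -> sumn (map f s) = size s * c.
Proof. by move=> fE; elim: s => //= x s ->; rewrite fE mulSn. Qed.

Lemma has_enum_unique (T : finType) (P Q : pred T) (x0 : T) :
  (forall x, reflect (x = x0) (P x)) -> has (fun x => P x && Q x) (enum T) = Q x0.
Proof.
move=> PE; apply/hasP/idP => [[x _ /andP [/PE -> //]] | Qx0].
by exists x0; rewrite ?mem_enum // Qx0 andbT; apply/PE.
Qed.

Lemma all_enum_unique (T : finType) (P Q : pred T) (x0 : T) :
  (forall x, reflect (x = x0) (P x)) -> all (fun x => P x ==> Q x) (enum T) = Q x0.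
Proof.
move=> PE; apply/allP/idP => [/(_ x0 (mem_enum _ _)) | Qx0 x _].
  by case: (PE x0) => // -[].
by apply/implyP => /PE ->.
Qed.

Definition gate (V : Type) (disj : bool) (l : seq (formula V)) : formula V :=
  if disj then FOr l else FAnd l.

Definition lfiso (V : Type) (l1 l2 : seq (formula V)) :=
  exists2 l2', Permutation l2 l2' & Forall2 (@fiso V) l1 l2'.

Section Gates.
Variable V : Type.
Implicit Types (x : V -> bool) (disj : bool) (l : seq (formula V)).

Lemma feval_gate x disj l :
  feval x (gate disj l) = if disj then has (feval x) l else all (feval x) l.
Proof. by case: disj. Qed.

Lemma feval_gate_cat x disj l1 l2 :
  feval x (gate disj (l1 ++ l2)) =
  (if disj then orb else andb) (feval x (gate disj l1)) (feval x (gate disj l2)).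
Proof. by case: disj; rewrite /= ?has_cat ?all_cat. Qed.

Lemma feval_gate_flatten (I : Type) x disj (F : I -> seq (formula V)) (s : seq I) :
  feval x (gate disj (flatten (map F s))) =
  if disj then has (fun i => feval x (gate disj (F i))) s
  else all (fun i => feval x (gate disj (F i))) s.
Proof. by case: disj; rewrite /= ?has_flatten ?all_flatten ?has_map ?all_map. Qed.

Lemma fsize_gate disj l : fsize (gate disj l) = sumn (map (@fsize V) l).
Proof. by case: disj. Qed.

Lemma fdepth_gate_leq disj l D :
  (fdepth (gate disj l) <= D.+1) = all (fun f => fdepth f <= D) l.
Proof. by case: disj; rewrite /= ltnS; elim: l => //= f l <-; rewrite geq_max. Qed.

Lemma frelabel_gate (s : V -> V) disj l :
  frelabel s (gate disj l) = gate disj (map (frelabel s) l).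
Proof. by case: disj; rewrite /= List_mapE. Qed.

Lemma fiso_gate disj l1 l2 : lfiso l1 l2 -> fiso (gate disj l1) (gate disj l2).
Proof. by case=> l2' P F; case: disj; [exact: fiso_or P F | exact: fiso_and P F]. Qed.

Lemma lfiso_lit (v : V) (p : bool) : lfiso [:: FLit v p] [:: FLit v p].
Proof. by exists [:: FLit v p]; do !constructor. Qed.

Lemma lfiso_cat l1 l2 l3 l4 : lfiso l1 l2 -> lfiso l3 l4 -> lfiso (l1 ++ l3) (l2 ++ l4).
Proof.
by case=> l2' P12 F12 [l4' P34 F34]; exists (l2' ++ l4');
  [apply: Permutation_app | apply: Forall2_app].
Qed.

Lemma lfiso_flatten (I : eqType) (F G : I -> seq (formula V)) (s : seq I) :
  (forall i, i \in s -> lfiso (F i) (G i)) ->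
  lfiso (flatten (map F s)) (flatten (map G s)).
Proof.
elim: s => [|i s IH] FG /=; first by exists [::].
apply: lfiso_cat; first by apply: FG; rewrite mem_head.
by apply: IH => j sj; apply: FG; rewrite inE sj orbT.
Qed.

Lemma lfiso_reindex (T : finType) (F G : T -> formula V) (r : T -> T) :
  injective r -> (forall c, fiso (F c) (G (r c))) ->
  lfiso (map F (enum T)) (map G (enum T)).
Proof.
move=> r_inj FG; exists (map G (map r (enum T))).
  by rewrite -!List_mapE; apply/Permutation_map/perm_eq_Permutation/perm_enum_inj.
by elim: (enum T) => [|c s IH]; constructor.
Qed.

End Gates.

Section Walks.
Variables (n : nat) (pi : nat -> 'I_n -> 'I_n).

Definition walk (t L : nat) (a : 'I_n) : 'I_n := foldl (fun y i => pi i y) a (iota t L).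

Lemma walkD t L1 L2 a : walk t (L1 + L2) a = walk (t + L1) L2 (walk t L1 a).
Proof. by rewrite /walk iotaD foldl_cat. Qed.

Variable m : nat.
Implicit Types (a b : 'I_n) (c : {ffun 'I_m.-1 -> 'I_n}).

(* The guessed walk visits a = node 0, c 0, ..., c (m - 2), b = node m; every
   [node a b c j] with j >= m is b. *)
Definition node a b c (j : nat) : 'I_n :=
  if j is j'.+1 then oapp c b (insub j') else a.

Definition walk_nodes (t L : nat) a : {ffun 'I_m.-1 -> 'I_n} :=
  [ffun o : 'I_m.-1 => walk t (o.+1 * L) a].

Lemma node_walk_nodes t L a b j :
  j <= m.-1 -> node a b (walk_nodes t L a) j = walk t (j * L) a.
Proof. by case: j => [|j] // lt_j_m; rewrite /node insubT /= ffunE. Qed.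

Definition valid_nodes (t L : nat) a b c :=
  all (fun j => walk (t + j * L) L (node a b c j) == node a b c j.+1) (iota 0 m.-1).

Lemma valid_nodesP t L a b c :
  reflect (c = walk_nodes t L a) (valid_nodes t L a b c).
Proof.
apply: (iffP allP) => [valid_c | ->]; last first.
  move=> j; rewrite mem_iota add0n => /andP [_ lt_j_m].
  by rewrite !node_walk_nodes ?(ltnW lt_j_m) // -walkD -mulSnr.
have nodeE j : j <= m.-1 -> node a b c j = walk t (j * L) a.
  elim: j => [|j IH] // lt_j_m.
  have j_in : j \in iota 0 m.-1 by rewrite mem_iota.
  have /eqP <- := valid_c j j_in.
  by rewrite IH ?(ltnW lt_j_m) // -walkD mulSnr.
by apply/ffunP => o; rewrite ffunE -nodeE // /node valK.
Qed.

Lemma walk_nodes_last t L a b :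
  walk (t + m.-1 * L) L (node a b (walk_nodes t L a) m.-1) = walk t (m.-1.+1 * L) a.
Proof. by rewrite node_walk_nodes // -walkD mulSnr. Qed.

End Walks.

Section RelabelNodes.
Variables (n m : nat) (h : nat -> {perm 'I_n}) (t L : nat).

Definition relabel_nodes (c : {ffun 'I_m.-1 -> 'I_n}) : {ffun 'I_m.-1 -> 'I_n} :=
  [ffun o : 'I_m.-1 => h (t + o.+1 * L) (c o)].

Lemma relabel_nodes_inj : injective relabel_nodes.
Proof.
move=> c1 c2 /ffunP eq12; apply/ffunP => o.
by have := eq12 o; rewrite !ffunE => /perm_inj.
Qed.

Lemma node_relabel_nodes a b b' c j : j <= m.-1 ->
  node (h t a) b' (relabel_nodes c) j = h (t + j * L) (node a b c j).
Proof. by case: j => [|j] lt_j_m; rewrite /node ?addn0 // insubT /= ffunE. Qed.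

End RelabelNodes.

(* [F] is read as a decision procedure for walks of length [L]: the disjunction
   (if [disj]) or conjunction (otherwise) of [F disj t a b p] should hold iff
   [(walk pi t L a == b) == p]. *)
Section Guess.
Variables (V : Type) (n m : nat) (L : nat).
Variable F : bool -> nat -> 'I_n -> 'I_n -> bool -> seq (formula V).
Hypothesis m_gt0 : 0 < m.
Implicit Types (disj p : bool) (t : nat) (a b : 'I_n) (c : {ffun 'I_m.-1 -> 'I_n}).

Definition guess_gate disj t a b p c : formula V :=
  gate (~~ disj)
    (flatten [seq F (~~ disj) (t + j * L) (node a b c j) (node a b c j.+1) disj
             | j <- iota 0 m.-1]
     ++ F (~~ disj) (t + m.-1 * L) (node a b c m.-1) b p).

Definition guess_forest disj t a b p : seq (formula V) :=
  [seq guess_gate disj t a b p c | c <- enum {ffun 'I_m.-1 -> 'I_n}].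

Lemma fdepth_guess_forest D :
  (forall disj t a b p, fdepth (gate disj (F disj t a b p)) <= D.+1) ->
  forall disj t a b p, fdepth (gate disj (guess_forest disj t a b p)) <= D.+2.
Proof.
move=> F_depth disj t a b p; rewrite fdepth_gate_leq all_map; apply/allP => c _ /=.
rewrite fdepth_gate_leq all_cat all_flatten all_map -(fdepth_gate_leq (~~ disj)).
by rewrite F_depth andbT; apply/allP => j _ /=; rewrite -(fdepth_gate_leq (~~ disj)).
Qed.

Lemma fsize_guess_forest S :
  (forall disj t a b p, fsize (gate disj (F disj t a b p)) = S) ->
  forall disj t a b p, fsize (gate disj (guess_forest disj t a b p)) = n ^ m.-1 * (m * S).
Proof.
move=> F_size disj t a b p; rewrite fsize_gate -map_comp (sumn_map_const (c := m * S)).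
  by rewrite -cardE card_ffun !card_ord.
move=> c /=; rewrite fsize_gate map_cat sumn_cat map_flatten sumn_flatten -!map_comp.
rewrite -(fsize_gate (~~ disj)) F_size (sumn_map_const (c := S)) => [|j /=].
  by rewrite size_iota -mulSnr prednK.
by rewrite -(fsize_gate (~~ disj)) F_size.
Qed.

Section Semantics.
Variables (x : V -> bool) (pi : nat -> 'I_n -> 'I_n).
Hypothesis F_sem : forall disj t a b p,
  feval x (gate disj (F disj t a b p)) = ((walk pi t L a == b) == p).

Lemma feval_guess_gate disj t a b p c :
  let last_ok := (walk pi (t + m.-1 * L) L (node a b c m.-1) == b) == p in
  feval x (guess_gate disj t a b p c) =
  if disj then valid_nodes pi t L a b c && last_ok
  else valid_nodes pi t L a b c ==> last_ok.
Proof.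
rewrite /guess_gate feval_gate_cat feval_gate_flatten.
under eq_has => j do rewrite F_sem.
under eq_all => j do rewrite F_sem.
rewrite F_sem; case: disj => /=.
  by under eq_all => j do rewrite eqb_id.
by under eq_has => j do rewrite eqbF_neg; rewrite has_predC implybE.
Qed.

Lemma feval_guess_forest disj t a b p :
  feval x (gate disj (guess_forest disj t a b p)) = ((walk pi t (m * L) a == b) == p).
Proof.
have lastE : walk pi (t + m.-1 * L) L (node a b (walk_nodes pi m t L a) m.-1) =
             walk pi t (m * L) a by rewrite walk_nodes_last prednK.
rewrite -lastE feval_gate; case: disj.
  rewrite has_map (eq_has (feval_guess_gate true t a b p)).
  exact: (has_enum_unique _ (valid_nodesP pi t L a b)).
rewrite all_map (eq_all (feval_guess_gate false t a b p)).
exact: (all_enum_unique _ (valid_nodesP pi t L a b)).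
Qed.

End Semantics.

Section Relabel.
Variables (sigma : V -> V) (h : nat -> {perm 'I_n}) (T : nat).
Hypothesis F_relabel : forall disj t a b p, t + L <= T ->
  lfiso (map (frelabel sigma) (F disj t a b p)) (F disj t (h t a) (h (t + L) b) p).

Lemma guess_forest_relabel disj t a b p : t + m * L <= T ->
  lfiso (map (frelabel sigma) (guess_forest disj t a b p))
        (guess_forest disj t (h t a) (h (t + m * L) b) p).
Proof.
move=> le_mL_T; rewrite /guess_forest -map_comp.
apply: (lfiso_reindex (@relabel_nodes_inj n m h t L)) => c.
rewrite /comp /guess_gate frelabel_gate; apply: fiso_gate.
rewrite map_cat map_flatten -map_comp; apply: lfiso_cat.
  apply: lfiso_flatten => j; rewrite mem_iota add0n => /andP [_ lt_j_m].
  rewrite !(node_relabel_nodes h t L _ b) ?(ltnW lt_j_m) // mulSnr addnA.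
  apply: F_relabel; apply: leq_trans le_mL_T.
  by rewrite -addnA -mulSnr leq_add2l leq_mul2r (leq_trans lt_j_m (leq_pred m)) orbT.
rewrite (node_relabel_nodes h t L _ b) //.
have -> : t + m * L = t + m.-1 * L + L by rewrite -addnA -mulSnr prednK.
by apply: F_relabel; rewrite -addnA -mulSnr prednK.
Qed.

End Relabel.

End Guess.

Section WalkFormula.
Variables (V : Type) (n m : nat) (e : nat -> 'I_n -> 'I_n -> V).
Hypothesis m_gt0 : 0 < m.

Fixpoint walk_forest (l : nat) : bool -> nat -> 'I_n -> 'I_n -> bool -> seq (formula V) :=
  if l is l'.+1 then guess_forest m (m ^ l') (walk_forest l')
  else fun _ t a b p => [:: FLit (e t a b) p].

Definition walk_formula disj l t a b p := gate disj (walk_forest l disj t a b p).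

Lemma fdepth_walk_formula disj l t a b p : fdepth (walk_formula disj l t a b p) <= l.+1.
Proof.
elim: l disj t a b p => [|l IH] disj t a b p; first by case: disj.
exact: fdepth_guess_forest.
Qed.

Lemma fsize_walk_formula disj l t a b p :
  fsize (walk_formula disj l t a b p) = m ^ l * n ^ (l * m.-1).
Proof.
elim: l disj t a b p => [|l IH] disj t a b p; first by case: disj.
rewrite /walk_formula /= (fsize_guess_forest _ m_gt0 IH).
by rewrite expnS mulSn expnD; lia.
Qed.

Lemma feval_walk_formula x pi :
  (forall t a b, x (e t a b) = (pi t a == b)) ->
  forall disj l t a b p,
  feval x (walk_formula disj l t a b p) = ((walk pi t (m ^ l) a == b) == p).
Proof.
move=> xE disj l; elim: l disj => [|l IH] disj t a b p.
  by case: disj; case: p;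
    rewrite /walk_formula /walk expn0 /= ?orbF ?andbT xE ?eqb_id ?eqbF_neg.
by rewrite expnS; apply: feval_guess_forest.
Qed.

Lemma walk_forest_relabel (sigma : V -> V) (h : nat -> {perm 'I_n}) (T : nat) :
  (forall t a b, t < T -> sigma (e t a b) = e t (h t a) (h t.+1 b)) ->
  forall disj l t a b p, t + m ^ l <= T ->
  lfiso (map (frelabel sigma) (walk_forest l disj t a b p))
        (walk_forest l disj t (h t a) (h (t + m ^ l) b) p).
Proof.
move=> sigmaE disj l; elim: l disj => [|l IH] disj t a b p le_T.
  by rewrite expn0 addn1 in le_T *; rewrite /= sigmaE //; apply: lfiso_lit.
by rewrite expnS in le_T *; apply: (guess_forest_relabel m_gt0 IH).
Qed.

End WalkFormula.

Lemma perm_prodE (T : finType) (I : Type) (r : seq I) (F : I -> {perm T}) (a : T) :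
  (\prod_(i <- r) F i)%g a = foldl (fun y i => F i y) a r.
Proof. by elim: r a => [|i r IH] a; rewrite ?big_nil ?perm1 // big_cons permM IH. Qed.

Section Word.
Variables (k n : nat) (x : var k n -> bool).

Lemma in_domain_perm_mx :
  in_domain x -> exists s : 'I_k -> {perm 'I_n}, forall i, Mof x i = perm_mx (s i).
Proof.
by move=> x_dom; exact: fin_all_exists (fun i => elimT (is_perm_mxP _) (x_dom i)).
Qed.

Lemma Mof_perm_mxE i (s : {perm 'I_n}) a b :
  Mof x i = perm_mx s -> x (i, a, b) = (s a == b).
Proof.
move/(congr1 (fun M : 'M[int]_n => M a b)); rewrite /perm_mx !mxE.
by case: (x _); case: (s a == b).
Qed.

Lemma Word_walk (hn : 0 < n) (s : nat -> {perm 'I_n}) :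
  (forall i : 'I_k, Mof x i = perm_mx (s i)) ->
  Word hn x = (walk (fun t => s t) 0 k (Ordinal hn) == Ordinal hn).
Proof.
move=> sE; rewrite /Word (eq_bigr _ (fun i _ => sE i)).
rewrite -(big_morph _ (@perm_mxM int n) (perm_mx1 int n)) -(big_mkord xpredT s).
rewrite /perm_mx !mxE perm_prodE /index_iota subn0 Num.Theory.pnatr_eq1 /walk /=.
by case: (foldl _ _ _ == _).
Qed.

End Word.

Definition step_var (k n t : nat) (a b : 'I_n) : var k.+1 n := (inord t, a, b).

Lemma act_step_var k n (g : {ffun 'I_k.+1.-1 -> {perm 'I_n}}) t a b :
  t < k.+1 -> act_var g (step_var k t a b) = step_var k t (gext g t a) (gext g t.+1 b).
Proof. by move=> lt_t_k; rewrite /step_var /= inordK. Qed.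

Lemma gext0 k n (g : {ffun 'I_k.-1 -> {perm 'I_n}}) : gext g 0 = 1%g.
Proof. by rewrite /gext; case: insub. Qed.

Lemma gext_last k n (g : {ffun 'I_k.-1 -> {perm 'I_n}}) : gext g k = 1%g.
Proof. by rewrite /gext insubF ?ltnn. Qed.

Theorem lemma3p1 (n k d : nat) (hn : (0 < n)%N) (hk : (0 < k)%N) (hd : (0 < d)%N)
  (m : nat) (hm : k = (m ^ d)%N) :
  (exists f : formula (var k n),
     Sigma_formula d f /\ Pinvariant f /\ computes hn f /\
     (fsize f <= k * n ^ (d * (m - 1)))%N) /\
  (exists f : formula (var k n),
     Pi_formula d f /\ Pinvariant f /\ computes hn f /\
     (fsize f <= k * n ^ (d * (m - 1)))%N).
Proof.
case: k hk hm => [//|k] _ hm.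
have m_gt0 : 0 < m by case: m hm => //; rewrite exp0n.
pose o := Ordinal hn.
pose f disj := walk_formula m (@step_var k n) disj d 0 o o true.
have f_depth disj : fdepth (f disj) <= d.+1 by apply: fdepth_walk_formula.
have f_size disj : fsize (f disj) <= k.+1 * n ^ (d * (m - 1)).
  by rewrite fsize_walk_formula // hm subn1 mulnC.
have f_inv disj : Pinvariant (f disj).
  move=> g; rewrite frelabel_gate; apply: fiso_gate.
  have := walk_forest_relabel m_gt0 (act_step_var g) disj (l := d) (t := 0) o o true.
  by rewrite add0n -hm gext0 gext_last !perm1; apply.
have f_computes disj : computes hn (f disj).
  move=> x /in_domain_perm_mx [s sE].
  have xE t a b : x (step_var k t a b) = (s (inord t) a == b).
    exact: Mof_perm_mxE (sE _).
  rewrite (Word_walk hn (s := fun t => s (inord t))) => [|i]; last by rewrite inord_val.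
  by rewrite (feval_walk_formula m_gt0 xE) -hm eqb_id.
by split; [exists (f true) | exists (f false)].
Qed.
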